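(* For complex $a,c$ with $|ac/q|<1$, \begin{align*} \frac{\bigl(q^2, ac; q^2\bigr)_\infty}{\bigl(q^2 a, q^2 c; q^2\bigr)_\infty}\sum_{n=0}^\infty \frac{\bigl(q^2/a, q^2/c; q^2\bigr)_n (ac/q)^n}{(q; q)_{2n} \bigl(1+q^{2n+1}\bigr)} =\sum_{n=0}^\infty \sum_{j=-n}^n \bigl(1-q^{2n+1}\bigr) q^{n^2-j^2-j}\frac{\bigl(q^2/a, q^2/c; q^2\bigr)_n (ac)^n}{\bigl(q^2 a, q^2 c; q^2\bigr)_n}. \end{align*}
   Context: Throughout, $q$ is a complex number with $0<|q|<1$. For $x\in\mathbb{C}$ and base $p\in\{q,q^2\}$, $(x;p)_\infty=\prod_{k=0}^\infty(1-xp^k)$ and, for an integer $n\ge 0$, $(x;p)_n=\prod_{k=0}^{n-1}(1-xp^k)$; also $(x_1,\dots,x_m;p)_n=(x_1;p)_n\cdots(x_m;p)_n$ for $n$ an integer or $\infty$. *)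

From Stdlib Require Import Reals ZArith.
From Coquelicot Require Import Coquelicot.
Open Scope C_scope.

Fixpoint qpoch (x p : C) (n : nat) : C :=
  match n with
  | O => 1
  | S m => qpoch x p m * (1 - x * Cpow p m)
  end.

Definition qpinf (x p : C) : C :=
  (real (Lim_seq (fun n => Re (qpoch x p n))),
   real (Lim_seq (fun n => Im (qpoch x p n)))).

Definition zpow (z : C) (k : Z) : C :=
  match k with
  | Z0 => 1
  | Zpos m => Cpow z (Pos.to_nat m)
  | Zneg m => / Cpow z (Pos.to_nat m)
  end.

Definition lhs_term (q a c : C) (n : nat) : C :=
  qpoch (q^2 / a) (q^2) n * qpoch (q^2 / c) (q^2) n * Cpow (a * c / q) n
  / (qpoch q q (2 * n) * (1 + Cpow q (2 * n + 1))).

Definition rhs_term (q a c : C) (n : nat) : C :=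
  sum_n (fun k =>
     let j := (Z.of_nat k - Z.of_nat n)%Z in
     (1 - Cpow q (2 * n + 1)) * zpow q (Z.of_nat n * Z.of_nat n - j * j - j)%Z
     * qpoch (q^2 / a) (q^2) n * qpoch (q^2 / c) (q^2) n * Cpow (a * c) n
     / (qpoch (q^2 * a) (q^2) n * qpoch (q^2 * c) (q^2) n)) (2 * n).

From Stdlib Require Import Reals ZArith Lia Lra.
From Coquelicot Require Import Coquelicot.
Open Scope C_scope.

(* Write p = q^2. The proof rests on the finite identity
     q^-n / ((q;q)_2n (1 + q^(2n+1)))
       = sum_(r <= n) (1 - q^(2r+1)) alpha_r / ((p;p)_(n-r) (p;p)_(n+r+1)),
     alpha_r = sum_(|j| <= r) q^(r^2 - j^2 - j),
   which says that ((1 - q^(2r+1)) alpha_r / (1 - p), beta_n), with beta_n the left-hand side,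
   is a Bailey pair relative to p in base p. To prove it, write alpha_r as q^(r^2) times
   sum_(|j| <= r) q^(-j^2-j) and exchange the sums over r and j: the sum over r telescopes,
   and what remains is sum_k q^k / ((p;p)_k (p;p)_(2n-k)) = 1 / (q;q)_2n.
   Inserting the identity into the left-hand series and exchanging the order of summation
   (the double series is dominated by a geometric one because |ac/q| < 1), the inner sum over
   n = m + r becomes a q-Gauss series with parameters A = p^(r+1)/a, B = p^(r+1)/c,
   C = p^(2r+2) and argument C/(AB) = ac. The q-Gauss summation, proved by iterating the
   contiguous relation C -> Cp and letting the number of iterations tend to infinity, evaluates
   it as a ratio of infinite products; after the finite factors are absorbed into the
   right-hand summand, what is left is the reciprocal of the prefactor on the left. *)

(** * Complex numbers and finite sums *)

Lemma pow_bound_01 (t : R) (n : nat) : (0 <= t <= 1)%R -> (0 <= t ^ n <= 1)%R.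
Proof. intros Ht. induction n; simpl; nra. Qed.

Lemma Cmod_1_minus_le (w : C) : (Cmod (1 - w) <= 1 + Cmod w)%R.
Proof. eapply Rle_trans; [apply Cmod_triangle|]. rewrite Cmod_opp, Cmod_1. lra. Qed.

Lemma Cmod_1_minus_ge (w : C) : (1 - Cmod w <= Cmod (1 - w))%R.
Proof.
  pose proof (Cmod_triangle (1 - w) w) as H. replace (1 - w + w) with (RtoC 1) in H by ring.
  rewrite Cmod_1 in H. lra.
Qed.

Lemma Cminus_1_neq_0 (w : C) : (Cmod w < 1)%R -> 1 - w <> 0.
Proof. intros Hw E. pose proof (Cmod_1_minus_ge w) as H. rewrite E, Cmod_0 in H. lra. Qed.

Lemma Cplus_1_neq_0 (w : C) : (Cmod w < 1)%R -> 1 + w <> 0.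
Proof.
  intros Hw. replace (1 + w) with (1 - - w) by ring. apply Cminus_1_neq_0. now rewrite Cmod_opp.
Qed.

Lemma Cdiv_neq_0 (x y : C) : x <> 0 -> y <> 0 -> x / y <> 0.
Proof.
  intros Hx Hy E. apply Hx. replace x with (x / y * y) by (field; exact Hy). rewrite E. ring.
Qed.

Lemma Cmod_mult_pow_lt_1 (x p : C) (n : nat) :
  (Cmod x < 1)%R -> (Cmod p <= 1)%R -> (Cmod (x * p ^ n) < 1)%R.
Proof.
  intros Hx Hp. rewrite Cmod_mult, Cmod_pow.
  pose proof (pow_bound_01 (Cmod p) n (conj (Cmod_ge_0 p) Hp)). pose proof (Cmod_ge_0 x). nra.
Qed.

(* Coquelicot states its [sum_n] identities in the carrier of an abstract monoid; the
   versions below are stated in [C], so that [ring] and [field] apply to them. *)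
Lemma sum_n_Cext_loc (a b : nat -> C) (n : nat) :
  (forall k, (k <= n)%nat -> @eq C (a k) (b k)) -> @eq C (sum_n a n) (sum_n b n).
Proof. apply sum_n_ext_loc. Qed.

Lemma sum_n_Cmult_l (c : C) (a : nat -> C) (n : nat) :
  @eq C (sum_n (fun k => c * a k) n) (c * sum_n a n).
Proof.
  induction n as [|n IH]; [now rewrite !sum_O|].
  rewrite !sum_Sn, IH. change plus with Cplus. ring.
Qed.

Lemma sum_n_Cmult_r (c : C) (a : nat -> C) (n : nat) :
  @eq C (sum_n (fun k => a k * c) n) (sum_n a n * c).
Proof.
  induction n as [|n IH]; [now rewrite !sum_O|].
  rewrite !sum_Sn, IH. change plus with Cplus. ring.
Qed.

Lemma sum_n_Cminus (a b : nat -> C) (n : nat) :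
  @eq C (sum_n (fun k => a k - b k) n) (sum_n a n - sum_n b n).
Proof.
  induction n as [|n IH]; [now rewrite !sum_O|].
  rewrite !sum_Sn, IH. change plus with Cplus. ring.
Qed.

Lemma sum_n_shift (f : nat -> C) (n : nat) :
  @eq C (sum_n f (S n)) (f 0%nat + sum_n (fun k => f (S k)) n).
Proof.
  induction n as [|n IH].
  - now rewrite sum_Sn, !sum_O.
  - rewrite sum_Sn, IH, (sum_Sn (fun k => f (S k))). change plus with Cplus. ring.
Qed.

Lemma sum_n_reflect (f : nat -> C) (M : nat) :
  @eq C (sum_n (fun k => f (M - k)%nat) M) (sum_n f M).
Proof.
  induction M as [|M IH]; [now rewrite !sum_O|].
  rewrite sum_n_shift, sum_Sn, Nat.sub_0_r.
  rewrite (sum_n_ext (fun k => f (S M - S k)%nat) (fun k => f (M - k)%nat)) by reflexivity.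
  rewrite IH. change plus with Cplus. ring.
Qed.

Lemma sum_n_triangle_swap (h c : nat -> C) (n : nat) :
  @eq C (sum_n (fun r => h r * sum_n c r) n)
        (sum_n (fun j => c j * sum_n (fun i => h (j + i)%nat) (n - j)) n).
Proof.
  induction n as [|n IH]; [rewrite !sum_O; simpl; ring|].
  rewrite sum_Sn, IH, (sum_Sn (fun j => c j * sum_n (fun i => h (j + i)%nat) (S n - j))).
  rewrite (sum_n_Cext_loc (fun j => c j * sum_n (fun i => h (j + i)%nat) (S n - j))
             (fun j => plus (c j * sum_n (fun i => h (j + i)%nat) (n - j)) (h (S n) * c j))).
  - rewrite sum_n_plus, Nat.sub_diag, sum_O, Nat.add_0_r.
    rewrite sum_n_Cmult_l, sum_Sn. change plus with Cplus. ring.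
  - intros j Hj. replace (S n - j)%nat with (S (n - j)) by lia. rewrite sum_Sn.
    replace (j + S (n - j))%nat with (S n) by lia. change plus with Cplus. ring.
Qed.

Lemma sum_n_antidiagonal (f : nat -> nat -> C) (N : nat) :
  @eq C (sum_n (fun n => sum_n (fun r => f r (n - r)%nat) n) N)
        (sum_n (fun r => sum_n (f r) (N - r)%nat) N).
Proof.
  induction N as [|N IH]; [now rewrite !sum_O|].
  rewrite sum_Sn, IH, (sum_Sn (fun r => sum_n (f r) (S N - r)%nat)).
  rewrite (sum_n_ext_loc (fun r => sum_n (f r) (S N - r)%nat)
             (fun r => plus (sum_n (f r) (N - r)%nat) (f r (S N - r)%nat))).
  - rewrite sum_n_plus, sum_Sn, Nat.sub_diag, sum_O. change plus with Cplus. ring.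
  - intros r Hr. replace (S N - r)%nat with (S (N - r)) by lia. apply sum_Sn.
Qed.

Lemma sum_n_le_loc (a b : nat -> R) (n : nat) :
  (forall k, (k <= n)%nat -> a k <= b k)%R -> (sum_n a n <= sum_n b n)%R.
Proof.
  intros Hab. induction n as [|n IH]; rewrite ?sum_O, ?sum_Sn; [apply Hab; lia|].
  apply Rplus_le_compat; [apply IH; intros; apply Hab; lia | apply Hab; lia].
Qed.

(** * Limits of complex sequences and series *)

Definition is_lim_Cseq (u : nat -> C) (l : C) : Prop :=
  filterlim u eventually (locally l).

(* [qpinf x p] unfolds to [Clim (qpoch x p)]. *)
Definition Clim (u : nat -> C) : C :=
  (real (Lim_seq (fun n => Re (u n))), real (Lim_seq (fun n => Im (u n)))).

Lemma is_lim_Cseq_unique (u : nat -> C) (l l' : C) :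
  is_lim_Cseq u l -> is_lim_Cseq u l' -> l = l'.
Proof. exact (filterlim_locally_unique (K := C_AbsRing) (V := C_NormedModule) u l l'). Qed.

Lemma is_lim_Cseq_Clim (u : nat -> C) (l : C) : is_lim_Cseq u l -> Clim u = l.
Proof.
  intros Hu. unfold Clim.
  rewrite (is_lim_seq_unique (fun n => Re (u n)) (Re l)),
          (is_lim_seq_unique (fun n => Im (u n)) (Im l)).
  - now destruct l.
  - eapply filterlim_comp; [exact Hu | apply (continuous_snd (fst l) (snd l))].
  - eapply filterlim_comp; [exact Hu | apply (continuous_fst (fst l) (snd l))].
Qed.

Lemma is_lim_Cseq_const (l : C) : is_lim_Cseq (fun _ => l) l.
Proof. apply filterlim_const. Qed.

Lemma is_lim_Cseq_plus (u v : nat -> C) (l m : C) :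
  is_lim_Cseq u l -> is_lim_Cseq v m -> is_lim_Cseq (fun n => u n + v n) (l + m).
Proof. intros Hu Hv. exact (filterlim_comp_2 _ _ _ Hu Hv (filterlim_plus l m)). Qed.

(* [filterlim_mult] is stated for the neighbourhoods of [C_AbsRing], which agree with those
   of [C] only up to [locally_C]. *)
Lemma filterlim_Cmult (l m : C) :
  filterlim (fun z : C * C => fst z * snd z)
    (filter_prod (locally l) (locally m)) (locally (l * m)).
Proof.
  intros P HP. apply locally_C in HP.
  destruct (filterlim_mult (K := C_AbsRing) l m P HP) as [Q R HQ HR HQR].
  exists Q R; [apply locally_C | apply locally_C | ]; assumption.
Qed.

Lemma is_lim_Cseq_mult (u v : nat -> C) (l m : C) :
  is_lim_Cseq u l -> is_lim_Cseq v m -> is_lim_Cseq (fun n => u n * v n) (l * m).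
Proof. intros Hu Hv. exact (filterlim_comp_2 _ _ _ Hu Hv (filterlim_Cmult l m)). Qed.

Lemma is_lim_Cseq_minus (u v : nat -> C) (l m : C) :
  is_lim_Cseq u l -> is_lim_Cseq v m -> is_lim_Cseq (fun n => u n - v n) (l - m).
Proof.
  intros Hu Hv. replace (l - m) with (l + -1 * m) by ring.
  eapply filterlim_ext;
    [|exact (is_lim_Cseq_plus _ _ _ _ Hu (is_lim_Cseq_mult _ _ _ _ (is_lim_Cseq_const (-1)) Hv))].
  intros n. simpl. ring.
Qed.

Lemma is_lim_Cseq_Cmod (u : nat -> C) (l : C) :
  is_lim_Cseq u l -> is_lim_seq (fun n => Cmod (u n)) (Cmod l).
Proof.
  intros Hu. eapply filterlim_comp; [exact Hu | apply (filterlim_norm (V := C_NormedModule) l)].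
Qed.

Lemma is_lim_Cseq_incr_n (u : nat -> C) (N : nat) (l : C) :
  is_lim_Cseq u l <-> is_lim_Cseq (fun n => u (n + N)%nat) l.
Proof.
  split; intros Hu P HP; destruct (Hu P HP) as [M HM].
  - exists M. intros n Hn. apply HM. lia.
  - exists (M + N)%nat. intros n Hn. replace n with (n - N + N)%nat by lia. apply HM. lia.
Qed.

Lemma is_lim_Cseq_le (u : nat -> C) (l : C) (e : nat -> R) :
  eventually (fun n => Cmod (u n - l) <= e n)%R -> is_lim_seq e 0%R -> is_lim_Cseq u l.
Proof.
  intros [M HM] He. apply filterlim_locally. intros eps.
  apply is_lim_seq_spec in He. destruct (He eps) as [N HN].
  exists (max M N). intros n Hn. apply (norm_compat1 (V := C_NormedModule)).
  specialize (HN n ltac:(lia)). rewrite Rminus_0_r in HN.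
  eapply Rle_lt_trans; [apply HM; lia | eapply Rle_lt_trans; [apply Rle_abs | exact HN]].
Qed.

Lemma is_lim_Cseq_pow (p : C) : (Cmod p < 1)%R -> is_lim_Cseq (fun n => p ^ n) 0.
Proof.
  intros Hp. apply is_lim_Cseq_le with (e := fun n => (Cmod p ^ n)%R).
  - exists 0%nat. intros n _. replace (p ^ n - 0) with (p ^ n) by ring.
    rewrite Cmod_pow. apply Rle_refl.
  - apply is_lim_seq_geom. rewrite Rabs_pos_eq by apply Cmod_ge_0. exact Hp.
Qed.

Lemma is_series_lim_0 (a : nat -> C) (l : C) : is_series a l -> is_lim_Cseq a 0.
Proof.
  intros Ha. apply (is_lim_Cseq_incr_n _ 1).
  assert (Hshift : is_lim_Cseq (fun n => sum_n a (n + 1)%nat) l)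
    by (apply is_lim_Cseq_incr_n, Ha).
  assert (Hneg : is_lim_Cseq (fun n => -1 * sum_n a n) (-1 * l))
    by (apply is_lim_Cseq_mult; [apply is_lim_Cseq_const | exact Ha]).
  replace (RtoC 0) with (l + -1 * l) by ring.
  eapply filterlim_ext; [|exact (is_lim_Cseq_plus _ _ _ _ Hshift Hneg)].
  intros n. simpl. rewrite Nat.add_1_r, sum_Sn. change plus with Cplus. ring.
Qed.

Lemma is_series_tail (a : nat -> C) (l : C) (M : nat) :
  is_series a l -> is_series (fun m => a (S M + m)%nat) (l - sum_n a M).
Proof.
  intros Ha. apply is_series_incr_n; [lia|].
  replace l with (l - sum_n a M + sum_n a M) in Ha by ring.
  exact Ha.
Qed.

Lemma is_series_Cmod_le (a : nat -> C) (b : nat -> R) (l : C) (lb : R) :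
  (forall n, Cmod (a n) <= b n)%R -> is_series a l -> is_series b lb -> (Cmod l <= lb)%R.
Proof.
  intros Hab Ha Hb.
  refine (is_lim_seq_le _ _ (Cmod l) lb _ (is_lim_Cseq_Cmod _ _ Ha) Hb).
  intros n. eapply Rle_trans; [apply (norm_sum_n_m (V := C_NormedModule))|].
  apply sum_n_m_le, Hab.
Qed.

Lemma ex_series_Cmod_le (a : nat -> C) (b : nat -> R) :
  (forall n, Cmod (a n) <= b n)%R -> ex_series b -> exists l, is_series a l.
Proof. intros Hab Hb. exact (ex_series_le (V := C_CompleteNormedModule) a b Hab Hb). Qed.

Lemma is_series_geom_scal (K t : R) : (0 <= t < 1)%R ->
  is_series (fun n => K * t ^ n)%R (K / (1 - t))%R.
Proof.
  intros Ht. apply (is_series_scal_l (V := R_NormedModule)), is_series_geom.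
  rewrite Rabs_pos_eq; lra.
Qed.

Lemma pow_lt_eventually (t e : R) : (0 <= t < 1)%R -> (0 < e)%R ->
  exists M, forall n, (M <= n)%nat -> (t ^ n < e)%R.
Proof.
  intros Ht He. destruct (pow_lt_1_zero t ltac:(rewrite Rabs_pos_eq; lra) e He) as [M HM].
  exists M. intros n Hn. specialize (HM n Hn). now rewrite Rabs_pos_eq in HM by (apply pow_le; lra).
Qed.

Lemma succ_pow_le_inv (r : R) (n : nat) : (0 <= r < 1)%R -> (INR (S n) * r ^ n <= / (1 - r))%R.
Proof.
  intros Hr. assert (Hinv : (/ (1 - r) = r * / (1 - r) + 1)%R) by (field; lra).
  induction n as [|n IH].
  - simpl. rewrite Rmult_1_r, Hinv.
    assert (0 <= r * / (1 - r))%R by (apply Rmult_le_pos; [|apply Rlt_le, Rinv_0_lt_compat]; lra).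
    lra.
  - rewrite S_INR. simpl pow.
    assert (0 <= r ^ n <= 1)%R by (apply pow_bound_01; lra).
    assert (r * (INR (S n) * r ^ n) <= r * / (1 - r))%R by (apply Rmult_le_compat_l; lra).
    nra.
Qed.

Lemma succ_pow_le_geom (s : R) : (0 <= s < 1)%R ->
  exists K tau, (0 < K)%R /\ (s <= tau < 1)%R /\ forall n, (INR (S n) * s ^ n <= K * tau ^ n)%R.
Proof.
  intros Hs. set (tau := ((1 + s) / 2)%R). set (rho := (s / tau)%R).
  assert (Htau : (0 < tau)%R) by (unfold tau; lra).
  assert (Hrho : (0 <= rho < 1)%R).
  { unfold rho. split; [apply Rdiv_le_0_compat; lra|].
    apply (Rmult_lt_reg_r tau); [lra|]. unfold Rdiv. rewrite Rmult_assoc, Rinv_l by lra.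
    unfold tau. lra. }
  exists (/ (1 - rho))%R, tau. split; [apply Rinv_0_lt_compat; lra|]. split; [unfold tau; lra|].
  intros n. replace s with (rho * tau)%R by (unfold rho; field; lra).
  rewrite Rpow_mult_distr, <- Rmult_assoc. apply Rmult_le_compat_r; [apply pow_le; lra|].
  now apply succ_pow_le_inv.
Qed.

Lemma is_lim_seq_succ_pow (t : R) : (0 <= t < 1)%R -> is_lim_seq (fun n => INR (S n) * t ^ n)%R 0%R.
Proof.
  intros Ht. destruct (succ_pow_le_geom t Ht) as [K [sigma [HK [Hsigma Hbound]]]].
  apply is_lim_seq_le_le with (u := fun _ => 0%R) (w := fun n => (K * sigma ^ n)%R).
  - intros n. split; [|apply Hbound]. apply Rmult_le_pos; [apply pos_INR | apply pow_le; lra].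
  - apply is_lim_seq_const.
  - replace (Finite 0) with (Rbar_mult K 0%R) by (simpl; f_equal; ring).
    apply is_lim_seq_scal_l, is_lim_seq_geom. rewrite Rabs_pos_eq; lra.
Qed.

Lemma pow_anti_01 (t : R) (m n : nat) : (0 <= t <= 1)%R -> (m <= n)%nat -> (t ^ n <= t ^ m)%R.
Proof.
  intros Ht Hmn. replace n with (m + (n - m))%nat by lia. rewrite pow_add.
  pose proof (pow_bound_01 t (n - m) Ht). pose proof (pow_bound_01 t m Ht). nra.
Qed.

Lemma Cmod_series_tail_le (g : nat -> C) (G : C) (K tau : R) (M : nat) :
  (0 <= tau < 1)%R -> (forall m, Cmod (g m) <= K * tau ^ m)%R -> is_series g G ->
  (Cmod (G - sum_n g M) <= K * tau ^ S M / (1 - tau))%R.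
Proof.
  intros Htau Hg HG.
  refine (is_series_Cmod_le _ _ _ _ _ (is_series_tail _ _ M HG)
            (is_series_geom_scal (K * tau ^ S M) tau Htau)).
  intros m. eapply Rle_trans; [apply Hg|]. rewrite pow_add. right. ring.
Qed.

Lemma is_series_antidiagonal (f : nat -> nat -> C) (K tau : R) (F : nat -> C) (U : C) :
  (0 <= K)%R -> (0 <= tau < 1)%R ->
  (forall r m, Cmod (f r m) <= K * tau ^ (r + m))%R ->
  (forall r, is_series (f r) (F r)) -> is_series F U ->
  is_series (fun n => sum_n (fun r => f r (n - r)%nat) n) U.
Proof.
  intros HK Htau Hf HF HU.
  set (k := (K / (1 - tau) * tau)%R).
  assert (Hk : (0 <= k)%R) by (unfold k; apply Rmult_le_pos; [apply Rdiv_le_0_compat|]; lra).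
  apply is_lim_Cseq_le
    with (e := fun N => (k * (INR (S N) * tau ^ N) + Cmod (sum_n F N - U))%R).
  2:{ assert (H1 : is_lim_seq (fun N => k * (INR (S N) * tau ^ N))%R 0%R).
      { replace (Finite 0) with (Rbar_mult k 0%R) by (simpl; f_equal; ring).
        apply is_lim_seq_scal_l, is_lim_seq_succ_pow, Htau. }
      assert (H2 : is_lim_seq (fun N => Cmod (sum_n F N - U)) 0%R).
      { replace 0%R with (Cmod (U - U)) by (replace (U - U) with (RtoC 0) by ring; apply Cmod_0).
        exact (is_lim_Cseq_Cmod _ _ (is_lim_Cseq_minus _ _ _ _ HU (is_lim_Cseq_const U))). }
      replace 0%R with (0 + 0)%R by ring. now apply is_lim_seq_plus'. }
  exists 0%nat. intros N _.
  rewrite sum_n_antidiagonal.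
  replace (sum_n (fun r => sum_n (f r) (N - r)%nat) N - U)
    with (- sum_n (fun r => F r - sum_n (f r) (N - r)%nat) N + (sum_n F N - U))
    by (rewrite sum_n_Cminus; ring).
  eapply Rle_trans; [apply Cmod_triangle|]. rewrite Cmod_opp. apply Rplus_le_compat_r.
  eapply Rle_trans; [apply (norm_sum_n_m (V := C_NormedModule))|].
  eapply Rle_trans; [apply sum_n_m_le with (b := fun _ => (K * tau ^ S N / (1 - tau))%R)|].
  - intros r. eapply Rle_trans.
    + apply (Cmod_series_tail_le (f r) (F r) (K * tau ^ r) tau (N - r) Htau); [|exact (HF r)].
      intros m. rewrite Rmult_assoc, <- pow_add. apply Hf.
    + unfold Rdiv. rewrite (Rmult_assoc K (tau ^ r)), <- pow_add.
      apply Rmult_le_compat_r; [apply Rlt_le, Rinv_0_lt_compat; lra|].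
      apply Rmult_le_compat_l; [exact HK | apply pow_anti_01; [lra | lia]].
  - change (sum_n_m (fun _ => K * tau ^ S N / (1 - tau)) 0 N)%R
      with (sum_n (fun _ => K * tau ^ S N / (1 - tau)) N)%R.
    rewrite sum_n_const. unfold k. simpl pow. right. field. lra.
Qed.

(** * q-Pochhammer symbols *)

Lemma qpoch_S (x p : C) (n : nat) : qpoch x p (S n) = qpoch x p n * (1 - x * p ^ n).
Proof. reflexivity. Qed.

Lemma qpoch_add (x p : C) (r m : nat) : qpoch x p (r + m) = qpoch x p r * qpoch (x * p ^ r) p m.
Proof.
  induction m as [|m IHm]; simpl.
  - rewrite Nat.add_0_r. ring.
  - rewrite Nat.add_succ_r. simpl. rewrite IHm, Cpow_add_r. ring.
Qed.

Lemma qpoch_S_shift (x p : C) (n : nat) : qpoch x p (S n) = (1 - x) * qpoch (x * p) p n.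
Proof.
  change (S n) with (1 + n)%nat. rewrite qpoch_add. simpl. f_equal; [ring | f_equal; ring].
Qed.

Lemma qpoch_neq_0 (x p : C) (n : nat) : (Cmod x < 1)%R -> (Cmod p <= 1)%R -> qpoch x p n <> 0.
Proof.
  intros Hx Hp. induction n as [|n IHn]; simpl.
  - apply C1_nz.
  - apply Cmult_neq_0; [exact IHn | apply Cminus_1_neq_0, Cmod_mult_pow_lt_1; assumption].
Qed.

Section Pochhammer_bounds.
Variables (x p : C).
Hypothesis Hp : (Cmod p < 1)%R.

Let r := Cmod p.
Let geom (n : nat) : R := ((1 - r ^ n) / (1 - r))%R.

Lemma geom_0 : geom 0 = 0%R.
Proof. unfold geom. simpl. field. unfold r. lra. Qed.

Lemma geom_S (n : nat) : geom (S n) = (geom n + r ^ n)%R.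
Proof. unfold geom. simpl. field. unfold r. lra. Qed.

Lemma geom_bound (n : nat) : (0 <= geom n <= / (1 - r))%R.
Proof.
  pose proof (pow_bound_01 r n (conj (Cmod_ge_0 p) (Rlt_le _ _ Hp))).
  assert (0 < 1 - r)%R by (unfold r; lra).
  unfold geom, Rdiv. split; [apply Rmult_le_pos; [lra | apply Rlt_le, Rinv_0_lt_compat; lra]|].
  rewrite <- (Rmult_1_l (/ (1 - r))) at 2.
  apply Rmult_le_compat_r; [apply Rlt_le, Rinv_0_lt_compat|]; lra.
Qed.

Lemma Cmod_qpoch_le_exp (n : nat) : (Cmod (qpoch x p n) <= exp (Cmod x * geom n))%R.
Proof.
  induction n as [|n IH].
  - rewrite geom_0, Rmult_0_r, exp_0. simpl. rewrite Cmod_1. lra.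
  - rewrite qpoch_S, Cmod_mult, geom_S, Rmult_plus_distr_l, exp_plus.
    apply Rmult_le_compat; try apply Cmod_ge_0; [exact IH|].
    eapply Rle_trans; [apply Cmod_1_minus_le|].
    rewrite Cmod_mult, Cmod_pow. apply exp_ineq1_le.
Qed.

Lemma Cmod_qpoch_le (n : nat) : (Cmod (qpoch x p n) <= exp (Cmod x / (1 - Cmod p)))%R.
Proof.
  eapply Rle_trans; [apply Cmod_qpoch_le_exp|].
  assert (Hle : (Cmod x * geom n <= Cmod x / (1 - Cmod p))%R)
    by (apply Rmult_le_compat_l; [apply Cmod_ge_0 | apply geom_bound]).
  destruct (Rle_lt_or_eq_dec _ _ Hle) as [Hlt|Heq].
  - left. now apply exp_increasing.
  - right. now rewrite Heq.
Qed.

Lemma Cmod_qpoch_ge (n : nat) : (Cmod x <= 1 - Cmod p)%R ->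
  (1 - Cmod x * geom n <= Cmod (qpoch x p n))%R.
Proof.
  intros Hx. pose proof (Cmod_ge_0 x). pose proof (Cmod_ge_0 p).
  induction n as [|n IH].
  - rewrite geom_0. simpl. rewrite Cmod_1. lra.
  - rewrite qpoch_S, Cmod_mult, geom_S.
    pose proof (Cmod_1_minus_ge (x * p ^ n)) as H1. rewrite Cmod_mult, Cmod_pow in H1. fold r in H1.
    pose proof (pow_bound_01 r n (conj (Cmod_ge_0 p) (Rlt_le _ _ Hp))).
    destruct (geom_bound n) as [Hg0 Hg1].
    assert (Hu : (0 <= Cmod x * geom n <= 1)%R).
    { split; [now apply Rmult_le_pos|].
      apply Rle_trans with ((1 - r) * / (1 - r))%R; [apply Rmult_le_compat; unfold r in *; lra|].
      right. field. unfold r. lra. }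
    assert (Hv : (0 <= Cmod x * r ^ n <= 1)%R)
      by (split; [apply Rmult_le_pos|]; unfold r in *; nra).
    apply Rle_trans with ((1 - Cmod x * geom n) * (1 - Cmod x * r ^ n))%R; [nra|].
    apply Rmult_le_compat; lra.
Qed.

Lemma Cmod_qpoch_ge_half (n : nat) :
  (Cmod x <= (1 - Cmod p) / 2)%R -> (/ 2 <= Cmod (qpoch x p n))%R.
Proof.
  intros Hx. pose proof (Cmod_ge_0 x). pose proof (Cmod_ge_0 p).
  assert (Hg : (Cmod x * geom n <= / 2)%R).
  { destruct (geom_bound n).
    apply Rle_trans with ((1 - Cmod p) / 2 * / (1 - r))%R; [apply Rmult_le_compat; lra|].
    right. unfold r. field. lra. }
  pose proof (Cmod_qpoch_ge n ltac:(lra)). lra.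
Qed.

End Pochhammer_bounds.

Lemma qpoch_shift_ge_half (x p : C) : (Cmod p < 1)%R ->
  exists M, forall N n, (M <= N)%nat -> (/ 2 <= Cmod (qpoch (x * p ^ N) p n))%R.
Proof.
  intros Hp. pose proof (Cmod_ge_0 p). pose proof (Cmod_ge_0 x).
  destruct (pow_lt_eventually (Cmod p) ((1 - Cmod p) / 2 / (Cmod x + 1)) ltac:(lra))
    as [M HM]; [apply Rdiv_lt_0_compat; lra|].
  exists M. intros N n HN. apply Cmod_qpoch_ge_half; [exact Hp|].
  specialize (HM N HN). rewrite Cmod_mult, Cmod_pow.
  assert (Cmod p ^ N * (Cmod x + 1) < (1 - Cmod p) / 2)%R.
  { apply (Rmult_lt_reg_r (/ (Cmod x + 1))); [apply Rinv_0_lt_compat; lra|].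
    rewrite Rmult_assoc, Rinv_r by lra. lra. }
  assert (0 <= Cmod p ^ N)%R by (apply pow_le; lra). nra.
Qed.

Lemma finite_min_pos (f : nat -> R) (M : nat) : (forall n, 0 < f n)%R ->
  exists L, (0 < L)%R /\ forall n, (n <= M)%nat -> (L <= f n)%R.
Proof.
  intros Hf. induction M as [|M [L [HL HM]]].
  - exists (f 0%nat). split; [apply Hf|]. intros n Hn. replace n with 0%nat by lia. lra.
  - exists (Rmin L (f (S M))). split; [now apply Rmin_pos|].
    intros n Hn. destruct (Nat.eq_dec n (S M)) as [->|Hne]; [apply Rmin_r|].
    eapply Rle_trans; [apply Rmin_l | apply HM; lia].
Qed.

Lemma qpoch_bounded_below (x p : C) : (Cmod p < 1)%R -> (forall n, qpoch x p n <> 0) ->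
  exists L, (0 < L)%R /\ forall n, (L <= Cmod (qpoch x p n))%R.
Proof.
  intros Hp Hnz. destruct (qpoch_shift_ge_half x p Hp) as [M HM].
  destruct (finite_min_pos (fun n => Cmod (qpoch x p n)) M) as [L [HL HLM]];
    [intros n; apply Cmod_gt_0, Hnz|].
  assert (HM0 : (0 < Cmod (qpoch x p M))%R) by apply Cmod_gt_0, Hnz.
  exists (Rmin L (Cmod (qpoch x p M) / 2)). split; [apply Rmin_pos; lra|].
  intros n. destruct (le_lt_dec n M) as [Hn|Hn].
  - eapply Rle_trans; [apply Rmin_l | now apply HLM].
  - eapply Rle_trans; [apply Rmin_r|].
    replace n with (M + (n - M))%nat by lia. rewrite qpoch_add, Cmod_mult.
    specialize (HM M (n - M)%nat (le_n M)). nra.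
Qed.

Lemma is_lim_qpoch (x p : C) : (Cmod p < 1)%R -> is_lim_Cseq (qpoch x p) (qpinf x p).
Proof.
  intros Hp. set (d k := qpoch x p (S k) - qpoch x p k).
  assert (Hd : forall k, (Cmod (d k) <= exp (Cmod x / (1 - Cmod p)) * Cmod x * Cmod p ^ k)%R).
  { intros k. unfold d. simpl.
    replace (qpoch x p k * (1 - x * p ^ k) - qpoch x p k) with (- (qpoch x p k * x * p ^ k))
      by ring.
    rewrite Cmod_opp, !Cmod_mult, Cmod_pow.
    apply Rmult_le_compat_r; [apply pow_le, Cmod_ge_0|].
    apply Rmult_le_compat_r; [apply Cmod_ge_0 | now apply Cmod_qpoch_le]. }
  destruct (ex_series_Cmod_le d _ Hd) as [l Hl].
  { eexists. apply is_series_geom_scal. split; [apply Cmod_ge_0 | exact Hp]. }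
  assert (Hsum : forall n, @eq C (sum_n d n) (qpoch x p (S n) - 1)).
  { induction n as [|n IH].
    - rewrite sum_O. unfold d. simpl. ring.
    - rewrite sum_Sn, IH. unfold d. change plus with Cplus. ring. }
  assert (Hlim : is_lim_Cseq (qpoch x p) (l + 1)).
  { apply (is_lim_Cseq_incr_n _ 1).
    eapply filterlim_ext; [|exact (is_lim_Cseq_plus _ _ _ _ Hl (is_lim_Cseq_const 1))].
    intros n. simpl. rewrite Hsum, Nat.add_1_r. ring. }
  rewrite <- (is_lim_Cseq_Clim _ _ Hlim) in Hlim. exact Hlim.
Qed.

Lemma qpinf_add (x p : C) (r : nat) : (Cmod p < 1)%R ->
  qpinf x p = qpoch x p r * qpinf (x * p ^ r) p.
Proof.
  intros Hp. apply (is_lim_Cseq_unique (fun m => qpoch x p (m + r))).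
  - now apply is_lim_Cseq_incr_n, is_lim_qpoch.
  - eapply filterlim_ext;
      [|exact (is_lim_Cseq_mult _ _ _ _ (is_lim_Cseq_const _) (is_lim_qpoch (x * p ^ r) p Hp))].
    intros m. simpl. now rewrite Nat.add_comm, qpoch_add.
Qed.

Lemma qpinf_neq_0 (x p : C) : (Cmod p < 1)%R -> (forall n, qpoch x p n <> 0) -> qpinf x p <> 0.
Proof.
  intros Hp Hnz E. destruct (qpoch_bounded_below x p Hp Hnz) as [L [HL HLn]].
  assert (Hle : Rbar_le L (Cmod (qpinf x p))).
  { apply (is_lim_seq_le (fun _ => L) (fun n => Cmod (qpoch x p n)));
      [exact HLn | apply is_lim_seq_const |].
    now apply is_lim_Cseq_Cmod, is_lim_qpoch. }
  rewrite E, Cmod_0 in Hle. simpl in Hle. lra.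
Qed.

(** * The q-Gauss summation *)

Section q_Gauss.
Variables (A B p : C).
Hypotheses (Hp : (Cmod p < 1)%R) (HA : A <> 0) (HB : B <> 0).

Definition gauss_term (c : C) (n : nat) : C :=
  qpoch A p n * qpoch B p n / (qpoch p p n * qpoch c p n) * (c / (A * B)) ^ n.

Lemma gauss_term_0 (c : C) : gauss_term c 0 = 1.
Proof. unfold gauss_term. simpl. field. Qed.

Lemma gauss_term_bound : exists K, (0 < K)%R /\
  forall (c : C) (L : R), (0 < L)%R -> (forall n, L <= Cmod (qpoch c p n))%R ->
  forall n, (Cmod (gauss_term c n) <= K / L * Cmod (c / (A * B)) ^ n)%R.
Proof.
  destruct (qpoch_bounded_below p p Hp) as [Lp [HLp HLpn]];
    [intros n; apply qpoch_neq_0; lra|].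
  set (UA := exp (Cmod A / (1 - Cmod p))). set (UB := exp (Cmod B / (1 - Cmod p))).
  assert (0 < UA)%R by apply exp_pos. assert (0 < UB)%R by apply exp_pos.
  exists (UA * UB / Lp)%R. split; [apply Rdiv_lt_0_compat; nra|].
  intros c L HL HLn n. unfold gauss_term.
  assert (Hnz : forall y, (L <= Cmod y)%R -> y <> 0)
    by (intros y Hy E; rewrite E, Cmod_0 in Hy; lra).
  assert (Hpn := HLpn n). assert (Hcn := HLn n).
  rewrite Cmod_mult, Cmod_pow, Cmod_div, !Cmod_mult
    by (apply Cmult_neq_0; [intros E; rewrite E, Cmod_0 in Hpn; lra | now apply Hnz]).
  apply Rmult_le_compat_r; [apply pow_le, Cmod_ge_0|].
  replace (UA * UB / Lp / L)%R with (UA * UB / (Lp * L))%R by (field; lra).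
  unfold Rdiv. apply Rmult_le_compat.
  - apply Rmult_le_pos; apply Cmod_ge_0.
  - apply Rlt_le, Rinv_0_lt_compat. nra.
  - apply Rmult_le_compat; try apply Cmod_ge_0; apply Cmod_qpoch_le, Hp.
  - apply Rinv_le_contravar; [nra | apply Rmult_le_compat; lra].
Qed.

Lemma ex_gauss_series (c : C) : (Cmod c < 1)%R -> (Cmod (c / (A * B)) < 1)%R ->
  exists F, is_series (gauss_term c) F.
Proof.
  intros Hc Hz. destruct (qpoch_bounded_below c p Hp) as [L [HL HLn]];
    [intros n; apply qpoch_neq_0; lra|].
  destruct gauss_term_bound as [K [HK HKn]].
  apply (ex_series_Cmod_le _ _ (HKn c L HL HLn)).
  eexists. apply is_series_geom_scal. split; [apply Cmod_ge_0 | exact Hz].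
Qed.

(* Summed over n, the right-hand side telescopes. *)
Lemma gauss_term_contiguous (c : C) (n : nat) : (Cmod c < 1)%R ->
  (1 - c) * (1 - c / (A * B)) * gauss_term c n
  - (1 - c / A) * (1 - c / B) * gauss_term (c * p) n
  = (1 - c) * ((1 - p ^ n) * gauss_term c n - (1 - p ^ S n) * gauss_term c (S n)).
Proof.
  intros Hc. assert (Hp1 : (Cmod p <= 1)%R) by lra.
  assert (Hc1 : 1 - c <> 0) by now apply Cminus_1_neq_0.
  assert (Hcn := qpoch_neq_0 c p n Hc Hp1).
  assert (Hpn := qpoch_neq_0 p p n Hp Hp1).
  assert (Hcp : 1 - c * p ^ n <> 0) by now apply Cminus_1_neq_0, Cmod_mult_pow_lt_1.
  assert (Hpp : 1 - p * p ^ n <> 0) by now apply Cminus_1_neq_0, Cmod_mult_pow_lt_1.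
  assert (Ecp : qpoch (c * p) p n = qpoch c p n * (1 - c * p ^ n) / (1 - c)).
  { change (qpoch c p n * (1 - c * p ^ n)) with (qpoch c p (S n)).
    rewrite qpoch_S_shift. field. exact Hc1. }
  unfold gauss_term. rewrite Ecp. simpl.
  replace (c * p / (A * B)) with (c / (A * B) * p) by (field; split; assumption).
  rewrite Cpow_mult_l. field. repeat split; assumption.
Qed.

Lemma gauss_contiguous (c F1 F2 : C) : (Cmod c < 1)%R ->
  is_series (gauss_term c) F1 -> is_series (gauss_term (c * p)) F2 ->
  (1 - c) * (1 - c / (A * B)) * F1 = (1 - c / A) * (1 - c / B) * F2.
Proof.
  intros Hc H1 H2. apply Ceq_minus.
  set (u n := (1 - c) * (1 - c / (A * B)) * gauss_term c n
              - (1 - c / A) * (1 - c / B) * gauss_term (c * p) n).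
  assert (Hpartial : forall n,
    @eq C (sum_n u n) (- (1 - c) * (1 - p ^ S n) * gauss_term c (S n))).
  { induction n as [|n IH].
    - rewrite sum_O. unfold u. rewrite gauss_term_contiguous, gauss_term_0 by exact Hc.
      simpl. ring.
    - rewrite sum_Sn, IH. unfold u. rewrite gauss_term_contiguous by exact Hc.
      change plus with Cplus. ring. }
  apply (is_lim_Cseq_unique (sum_n u)).
  - exact (is_series_minus _ _ _ _ (is_series_scal_l _ _ _ H1) (is_series_scal_l _ _ _ H2)).
  - assert (Hpow : is_lim_Cseq (fun n => p ^ (n + 1)) 0)
      by exact (proj1 (is_lim_Cseq_incr_n _ 1 0) (is_lim_Cseq_pow p Hp)).
    assert (Hterm : is_lim_Cseq (fun n => gauss_term c (n + 1)) 0)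
      by exact (proj1 (is_lim_Cseq_incr_n _ 1 0) (is_series_lim_0 _ _ H1)).
    replace (RtoC 0) with (- (1 - c) * (1 - 0) * 0) by ring.
    eapply filterlim_ext; [|apply is_lim_Cseq_mult; [apply is_lim_Cseq_mult|exact Hterm]];
      [| apply is_lim_Cseq_const | apply is_lim_Cseq_minus; [apply is_lim_Cseq_const | exact Hpow]].
    intros n. rewrite Hpartial, Nat.add_1_r. reflexivity.
Qed.

Definition gauss_sum (c : C) : C := Clim (sum_n (gauss_term c)).

Lemma is_series_gauss_sum (c : C) : (Cmod c < 1)%R -> (Cmod (c / (A * B)) < 1)%R ->
  is_series (gauss_term c) (gauss_sum c).
Proof.
  intros Hc Hz. destruct (ex_gauss_series c Hc Hz) as [F HF].
  replace (gauss_sum c) with F; [exact HF|].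
  symmetry. exact (is_lim_Cseq_Clim (sum_n (gauss_term c)) F HF).
Qed.

Section Fixed_argument.
Variable c : C.
Hypotheses (Hc : (Cmod c < 1)%R) (Hz : (Cmod (c / (A * B)) < 1)%R).

Lemma shifted_argument_lt_1 (N : nat) :
  (Cmod (c * p ^ N) < 1)%R /\ (Cmod (c * p ^ N / (A * B)) < 1)%R.
Proof.
  split; [apply Cmod_mult_pow_lt_1; lra|].
  replace (c * p ^ N / (A * B)) with (c / (A * B) * p ^ N) by (field; split; assumption).
  apply Cmod_mult_pow_lt_1; lra.
Qed.

Lemma gauss_sum_iterate (N : nat) :
  qpoch c p N * qpoch (c / (A * B)) p N * gauss_sum c
  = qpoch (c / A) p N * qpoch (c / B) p N * gauss_sum (c * p ^ N).
Proof.
  induction N as [|N IH].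
  - cbn [qpoch Cpow]. now rewrite !Cmult_1_r, !Cmult_1_l.
  - destruct (shifted_argument_lt_1 N) as [H1 H2].
    destruct (shifted_argument_lt_1 (S N)) as [H3 H4].
    replace (c * p ^ S N) with (c * p ^ N * p) in H3, H4 |- * by (simpl; ring).
    assert (Hcont := gauss_contiguous (c * p ^ N) _ _ H1
                       (is_series_gauss_sum _ H1 H2) (is_series_gauss_sum _ H3 H4)).
    rewrite !qpoch_S.
    transitivity (qpoch c p N * qpoch (c / (A * B)) p N * gauss_sum c
                  * ((1 - c * p ^ N) * (1 - c * p ^ N / (A * B)))); [field; split; assumption|].
    rewrite IH.
    transitivity (qpoch (c / A) p N * qpoch (c / B) p N
                  * ((1 - c * p ^ N) * (1 - c * p ^ N / (A * B)) * gauss_sum (c * p ^ N))); [ring|].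
    rewrite Hcont. field. split; assumption.
Qed.

(* Once all (c p^N; p)_n have modulus at least 1/2, [gauss_sum (c p^N) - 1] is a tail
   dominated by a geometric series of ratio |z p^N|. *)
Lemma is_lim_gauss_sum_shift : is_lim_Cseq (fun N => gauss_sum (c * p ^ N)) 1.
Proof.
  destruct gauss_term_bound as [K [HK HKn]].
  destruct (qpoch_shift_ge_half c p Hp) as [M HM].
  set (z := c / (A * B)) in *. pose proof (Cmod_ge_0 p). pose proof (Cmod_ge_0 z).
  apply is_lim_Cseq_le with (e := fun N => (2 * K * Cmod z / (1 - Cmod z) * Cmod p ^ N)%R).
  2:{ replace (Finite 0) with (Rbar_mult (2 * K * Cmod z / (1 - Cmod z))%R 0%R)
        by (simpl; f_equal; ring).
      apply is_lim_seq_scal_l, is_lim_seq_geom. rewrite Rabs_pos_eq; lra. }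
  exists M. intros N HN.
  destruct (shifted_argument_lt_1 N) as [H1 H2].
  assert (Ez : Cmod (c * p ^ N / (A * B)) = (Cmod z * Cmod p ^ N)%R)
    by (rewrite <- Cmod_pow, <- Cmod_mult; f_equal; unfold z; field; split; assumption).
  set (t := (Cmod z * Cmod p ^ N)%R) in Ez.
  assert (Ht : (0 <= t <= Cmod z)%R).
  { pose proof (pow_bound_01 (Cmod p) N ltac:(lra)). unfold t. split; nra. }
  replace (RtoC 1) with (sum_n (gauss_term (c * p ^ N)) 0) by (rewrite sum_O; apply gauss_term_0).
  eapply Rle_trans.
  - apply (Cmod_series_tail_le _ _ (2 * K) t 0); [lra | | now apply is_series_gauss_sum].
    intros m. rewrite <- Ez. replace (2 * K)%R with (K / / 2)%R by field.
    apply HKn; [lra | intros n; now apply HM].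
  - simpl pow. rewrite Rmult_1_r.
    apply Rle_trans with (2 * K * t / (1 - Cmod z))%R.
    + unfold Rdiv. apply Rmult_le_compat_l; [nra | apply Rinv_le_contravar; lra].
    + right. unfold t. field. lra.
Qed.

Theorem q_gauss : is_series (gauss_term c)
  (qpinf (c / A) p * qpinf (c / B) p / (qpinf c p * qpinf (c / (A * B)) p)).
Proof.
  assert (Hc' : forall n, qpoch c p n <> 0) by (intros n; apply qpoch_neq_0; lra).
  assert (Hz' : forall n, qpoch (c / (A * B)) p n <> 0) by (intros n; apply qpoch_neq_0; lra).
  assert (Hlim := is_lim_Cseq_mult _ _ _ _
    (is_lim_Cseq_mult _ _ _ _ (is_lim_qpoch c p Hp) (is_lim_qpoch (c / (A * B)) p Hp))
    (is_lim_Cseq_const (gauss_sum c))).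
  assert (Hlim' := is_lim_Cseq_mult _ _ _ _
    (is_lim_Cseq_mult _ _ _ _ (is_lim_qpoch (c / A) p Hp) (is_lim_qpoch (c / B) p Hp))
    is_lim_gauss_sum_shift).
  assert (E : qpinf c p * qpinf (c / (A * B)) p * gauss_sum c
              = qpinf (c / A) p * qpinf (c / B) p * 1).
  { apply (is_lim_Cseq_unique _ _ _ Hlim). eapply filterlim_ext; [|exact Hlim'].
    intros N. symmetry. apply gauss_sum_iterate. }
  replace (qpinf (c / A) p * qpinf (c / B) p / (qpinf c p * qpinf (c / (A * B)) p))
    with (gauss_sum c).
  - now apply is_series_gauss_sum.
  - rewrite Cmult_1_r in E. rewrite <- E. field. split; now apply qpinf_neq_0.
Qed.

End Fixed_argument.
End q_Gauss.

(** * A Bailey pair *)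

Lemma zpow_of_nat (q : C) (m : nat) : zpow q (Z.of_nat m) = q ^ m.
Proof. destruct m as [|m]; [reflexivity|]. simpl. now rewrite SuccNat2Pos.id_succ. Qed.

Lemma zpow_opp_of_nat (q : C) (m : nat) : zpow q (- Z.of_nat m) = / q ^ m.
Proof.
  destruct m as [|m]; simpl.
  - field.
  - now rewrite SuccNat2Pos.id_succ.
Qed.

Lemma zpow_sub_of_nat (q : C) (m k : nat) : q <> 0 ->
  zpow q (Z.of_nat m - Z.of_nat k) = q ^ m / q ^ k.
Proof.
  intros Hq. destruct (le_lt_dec k m) as [Hkm|Hmk].
  - replace (Z.of_nat m - Z.of_nat k)%Z with (Z.of_nat (m - k)) by lia.
    rewrite zpow_of_nat. replace m with (m - k + k)%nat at 2 by lia.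
    rewrite Cpow_add_r. field. now apply Cpow_nz.
  - replace (Z.of_nat m - Z.of_nat k)%Z with (- Z.of_nat (k - m))%Z by lia.
    rewrite zpow_opp_of_nat. replace k with (k - m + m)%nat at 2 by lia.
    rewrite Cpow_add_r. field. split; now apply Cpow_nz.
Qed.

Lemma zpow_add (q : C) (x y : Z) : q <> 0 -> zpow q (x + y) = zpow q x * zpow q y.
Proof.
  intros Hq.
  assert (Hdec : forall z, z = (Z.of_nat (Z.to_nat z) - Z.of_nat (Z.to_nat (- z)))%Z) by lia.
  rewrite (Hdec x), (Hdec y).
  set (m1 := Z.to_nat x). set (k1 := Z.to_nat (- x)).
  set (m2 := Z.to_nat y). set (k2 := Z.to_nat (- y)).
  replace (Z.of_nat m1 - Z.of_nat k1 + (Z.of_nat m2 - Z.of_nat k2))%Z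
    with (Z.of_nat (m1 + m2) - Z.of_nat (k1 + k2))%Z by lia.
  rewrite !zpow_sub_of_nat, !Cpow_add_r by exact Hq.
  field. split; now apply Cpow_nz.
Qed.

Lemma Cmod_zpow_le (q : C) (e : Z) (r : nat) : q <> 0 -> (Cmod q <= 1)%R -> (- Z.of_nat r <= e)%Z ->
  (Cmod (zpow q e) <= / Cmod q ^ r)%R.
Proof.
  intros Hq Hq1 He.
  replace e with (Z.of_nat (Z.to_nat (e + Z.of_nat r)) - Z.of_nat r)%Z by lia.
  rewrite zpow_sub_of_nat, Cmod_div, !Cmod_pow by (try apply Cpow_nz; exact Hq).
  unfold Rdiv. rewrite <- (Rmult_1_l (/ Cmod q ^ r)) at 2.
  apply Rmult_le_compat_r; [apply Rlt_le, Rinv_0_lt_compat, pow_lt, Cmod_gt_0, Hq|].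
  apply pow_bound_01. split; [apply Cmod_ge_0 | exact Hq1].
Qed.

Definition symsum (chi : Z -> C) (n : nat) : C :=
  sum_n (fun k => chi (Z.of_nat k - Z.of_nat n)%Z) (2 * n).

Definition symterm (chi : Z -> C) (j : nat) : C :=
  if Nat.eqb j 0 then chi 0%Z else chi (- Z.of_nat j)%Z + chi (Z.of_nat j).

Lemma symsum_fold (chi : Z -> C) (n : nat) : symsum chi n = sum_n (symterm chi) n.
Proof.
  unfold symsum. induction n as [|n IH]; [now rewrite !sum_O|].
  replace (2 * S n)%nat with (S (S (2 * n))) by lia.
  rewrite sum_Sn, sum_n_shift, (sum_Sn (symterm chi)), <- IH.
  rewrite (sum_n_ext (fun k => chi (Z.of_nat (S k) - Z.of_nat (S n))%Z)
             (fun k => chi (Z.of_nat k - Z.of_nat n)%Z)) by (intros k; f_equal; lia).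
  unfold symterm. simpl Nat.eqb. cbv iota.
  replace (Z.of_nat 0 - Z.of_nat (S n))%Z with (- Z.of_nat (S n))%Z by lia.
  replace (Z.of_nat (S (S (2 * n))) - Z.of_nat (S n))%Z with (Z.of_nat (S n)) by lia.
  change plus with Cplus. ring.
Qed.

Definition bailey_alpha (q : C) (r : nat) : C :=
  symsum (fun j => zpow q (Z.of_nat r * Z.of_nat r - j * j - j)%Z) r.

Definition bailey_beta (q : C) (n : nat) : C :=
  (/ q) ^ n / (qpoch q q (2 * n) * (1 + q ^ (2 * n + 1))).

Definition bailey_kernel (q : C) (n r : nat) : C :=
  / (qpoch (q ^ 2) (q ^ 2) (n - r) * qpoch (q ^ 2) (q ^ 2) (n + r + 1)).

Lemma Cmod_bailey_alpha_le (q : C) (r : nat) : q <> 0 -> (Cmod q <= 1)%R ->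
  (Cmod (bailey_alpha q r) <= INR (S (2 * r)) * / Cmod q ^ r)%R.
Proof.
  intros Hq Hq1. unfold bailey_alpha, symsum.
  eapply Rle_trans; [apply (norm_sum_n_m (V := C_NormedModule))|].
  change (sum_n_m ?f 0 (2 * r)) with (sum_n f (2 * r)). rewrite <- sum_n_const.
  apply sum_n_le_loc. intros k Hk. apply Cmod_zpow_le; auto. nia.
Qed.

Section Bailey_pair.
Variable q : C.
Hypotheses (Hq0 : q <> 0) (Hq1 : (Cmod q < 1)%R).

Let p := q ^ 2.

Lemma Cmod_sqr_lt_1 : (Cmod p < 1)%R.
Proof. unfold p. rewrite Cmod_pow. pose proof (Cmod_ge_0 q). simpl. nra. Qed.

Lemma qpoch_sqr_neq_0 (k : nat) : qpoch p p k <> 0.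
Proof. pose proof Cmod_sqr_lt_1. apply qpoch_neq_0; lra. Qed.

Lemma qpoch_q_neq_0 (k : nat) : qpoch q q k <> 0.
Proof. apply qpoch_neq_0; lra. Qed.

Lemma Cmod_pow_S_lt_1 (k : nat) : (Cmod (q ^ S k) < 1)%R.
Proof. rewrite Cpow_S. apply (Cmod_mult_pow_lt_1 q q k); lra. Qed.

Lemma pow_sqr (k : nat) : p ^ k = q ^ (2 * k).
Proof. unfold p. now rewrite Cpow_mult_r. Qed.

Lemma qpoch_sqr_S (m : nat) : qpoch p p (S m) = qpoch p p m * (1 - q ^ (2 * S m)).
Proof. rewrite qpoch_S, <- Cpow_S. now rewrite pow_sqr. Qed.

Lemma one_minus_pow_S_neq_0 (k : nat) : 1 - q ^ S k <> 0.
Proof. apply Cminus_1_neq_0, Cmod_pow_S_lt_1. Qed.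

Lemma one_plus_pow_S_neq_0 (k : nat) : 1 + q ^ S k <> 0.
Proof. apply Cplus_1_neq_0, Cmod_pow_S_lt_1. Qed.

Lemma pow_add_eq (i j k : nat) : (i + j = k)%nat -> q ^ i * q ^ j = q ^ k.
Proof. intros <-. now rewrite Cpow_add_r. Qed.

Let euler_term (N k : nat) : C := q ^ k / (qpoch p p k * qpoch p p (N - k)).

Lemma euler_term_lower (N : nat) :
  @eq C (sum_n (fun k => euler_term (S N) k * (1 - p ^ (S N - k))) (S N)) (sum_n (euler_term N) N).
Proof.
  pose proof Cmod_sqr_lt_1.
  rewrite sum_Sn, Nat.sub_diag. change plus with Cplus.
  replace (euler_term (S N) (S N) * (1 - p ^ 0)) with (RtoC 0) by (simpl; ring).
  rewrite Cplus_0_r. apply sum_n_Cext_loc. intros k Hk. unfold euler_term.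
  replace (S N - k)%nat with (S (N - k)) by lia.
  rewrite qpoch_S, Cpow_S.
  assert (1 - p * p ^ (N - k) <> 0) by (apply Cminus_1_neq_0, Cmod_mult_pow_lt_1; lra).
  field. repeat split; auto using qpoch_sqr_neq_0.
Qed.

Lemma euler_term_reflect (M k : nat) : (k <= M)%nat ->
  (1 - q ^ M) * euler_term M k - euler_term M k * (1 - p ^ (M - k))
  = q ^ M * (euler_term M (M - k) - euler_term M k).
Proof.
  intros Hk. unfold euler_term. replace (M - (M - k))%nat with k by lia.
  assert (Hpow : p ^ (M - k) * q ^ k = q ^ M * q ^ (M - k)).
  { rewrite pow_sqr, (pow_add_eq (2 * (M - k)) k (M + (M - k))) by lia.
    symmetry. now apply pow_add_eq. }
  replace (p ^ (M - k)) with (q ^ M * q ^ (M - k) / q ^ k)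
    by (rewrite <- Hpow; field; now apply Cpow_nz).
  field. repeat split; auto using qpoch_sqr_neq_0, Cpow_nz.
Qed.

Lemma sum_pow_div_qpoch_sqr (N : nat) :
  @eq C (sum_n (fun k => q ^ k / (qpoch p p k * qpoch p p (N - k))) N) (/ qpoch q q N).
Proof.
  fold (euler_term N). induction N as [|N IH].
  - rewrite sum_O. unfold euler_term. simpl. field.
  - assert (Hrec : (1 - q ^ S N) * sum_n (euler_term (S N)) (S N) - sum_n (euler_term N) N = 0).
    { rewrite <- (euler_term_lower N), <- sum_n_Cmult_l, <- sum_n_Cminus.
      rewrite (sum_n_Cext_loc _
                 (fun k => q ^ S N * (euler_term (S N) (S N - k) - euler_term (S N) k)))
        by (intros k Hk; now apply euler_term_reflect).
      rewrite sum_n_Cmult_l, sum_n_Cminus, (sum_n_reflect (euler_term (S N))). ring. }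
    apply Ceq_minus in Hrec. rewrite IH in Hrec.
    assert (HS := one_minus_pow_S_neq_0 N). assert (HN := qpoch_q_neq_0 N).
    rewrite qpoch_S, <- Cpow_S.
    replace (sum_n (euler_term (S N)) (S N))
      with ((1 - q ^ S N) * sum_n (euler_term (S N)) (S N) / (1 - q ^ S N)) by (field; exact HS).
    rewrite Hrec. field. split; assumption.
Qed.

Let tele_term (n r : nat) : C := (1 - q ^ (2 * r + 1)) * q ^ (r * r) * bailey_kernel q n r.

Let tele_sum (n j : nat) : C :=
  q ^ (j * j) / (qpoch p p (n - j) * qpoch p p (n + j) * (1 + q ^ (2 * n + 1))).

Lemma tele_term_last (n : nat) : tele_term n n = tele_sum n n.
Proof.
  unfold tele_term, tele_sum, bailey_kernel. fold p.
  rewrite Nat.sub_diag. replace (n + n + 1)%nat with (S (n + n)) by lia. rewrite qpoch_sqr_S.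
  set (a := q ^ (2 * n + 1)).
  assert (Ea : q ^ (2 * S (n + n)) = a * a) by (symmetry; apply pow_add_eq; lia).
  assert (Ha1 : 1 - a <> 0) by (unfold a; rewrite Nat.add_1_r; apply one_minus_pow_S_neq_0).
  assert (Ha2 : 1 + a <> 0) by (unfold a; rewrite Nat.add_1_r; apply one_plus_pow_S_neq_0).
  assert (Ha : 1 - a * a <> 0)
    by (replace (1 - a * a) with ((1 - a) * (1 + a)) by ring; now apply Cmult_neq_0).
  rewrite Ea. field. repeat split; auto using qpoch_sqr_neq_0.
Qed.

Lemma tele_sum_step (n j : nat) : (j < n)%nat -> tele_sum n j = tele_term n j + tele_sum n (S j).
Proof.
  intros Hj. unfold tele_term, tele_sum, bailey_kernel. fold p.
  set (a := q ^ (2 * j + 1)). set (w := q ^ (2 * (n - j))).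
  assert (E1 : qpoch p p (n - j) = qpoch p p (n - S j) * (1 - w)).
  { replace (n - j)%nat with (S (n - S j)) at 1 by lia. rewrite qpoch_sqr_S. unfold w.
    do 3 f_equal. lia. }
  assert (Eaw : q ^ (2 * S (n + j)) = a * (w * a)).
  { unfold a, w. rewrite (pow_add_eq (2 * (n - j)) (2 * j + 1) (2 * n + 1)) by lia.
    symmetry. apply pow_add_eq. lia. }
  assert (E2 : qpoch p p (n + j + 1) = qpoch p p (n + j) * (1 - a * (w * a)))
    by (rewrite <- Eaw, <- qpoch_sqr_S; f_equal; lia).
  assert (E2' : qpoch p p (n + S j) = qpoch p p (n + j) * (1 - a * (w * a)))
    by (rewrite <- E2; f_equal; lia).
  assert (E3 : q ^ (S j * S j) = q ^ (j * j) * a) by (symmetry; apply pow_add_eq; lia).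
  assert (E4 : q ^ (2 * n + 1) = w * a) by (symmetry; apply pow_add_eq; lia).
  assert (Ha : 1 - a <> 0) by (unfold a; rewrite Nat.add_1_r; apply one_minus_pow_S_neq_0).
  assert (Hw : 1 - w <> 0).
  { unfold w. replace (2 * (n - j))%nat with (S (2 * (n - j) - 1)) by lia.
    apply one_minus_pow_S_neq_0. }
  assert (Hawa : 1 - a * (w * a) <> 0)
    by (rewrite <- Eaw; replace (2 * S (n + j))%nat with (S (2 * (n + j) + 1)) by lia;
        apply one_minus_pow_S_neq_0).
  assert (Hwa : 1 + w * a <> 0) by (rewrite <- E4, Nat.add_1_r; apply one_plus_pow_S_neq_0).
  rewrite E1, E2, E2', E3, E4. field. repeat split; auto using qpoch_sqr_neq_0.
Qed.

Lemma sum_tele_term (n j : nat) : (j <= n)%nat ->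
  @eq C (sum_n (fun i => tele_term n (j + i)%nat) (n - j)) (tele_sum n j).
Proof.
  intros Hj. remember (n - j)%nat as d eqn:Hd. revert j Hj Hd.
  induction d as [|d IH]; intros j Hj Hd.
  - rewrite sum_O, Nat.add_0_r. replace j with n by lia. apply tele_term_last.
  - rewrite sum_n_shift, Nat.add_0_r, tele_sum_step by lia.
    rewrite <- (IH (S j)) by lia. f_equal. apply sum_n_ext. intros i. f_equal. lia.
Qed.

Let psi (j : Z) : C := zpow q (- (j * j) - j)%Z.

Let chi (n : nat) (j : Z) : C :=
  zpow q j / (qpoch p p (n - Z.abs_nat j) * qpoch p p (n + Z.abs_nat j)).

Lemma bailey_alpha_fold (r : nat) : bailey_alpha q r = q ^ (r * r) * sum_n (symterm psi) r.
Proof.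
  unfold bailey_alpha. rewrite <- symsum_fold. unfold symsum. rewrite <- sum_n_Cmult_l.
  apply sum_n_ext. intros k. unfold psi.
  rewrite <- zpow_of_nat, <- zpow_add by exact Hq0. f_equal. lia.
Qed.

Lemma symterm_psi (j : nat) : symterm psi j * q ^ (j * j) = symterm (zpow q) j.
Proof.
  unfold symterm, psi. destruct (Nat.eqb_spec j 0) as [->|Hj]; [simpl; ring|].
  rewrite Cmult_plus_distr_r, <- !zpow_of_nat, <- !zpow_add by exact Hq0.
  rewrite Cplus_comm. f_equal; f_equal; lia.
Qed.

Lemma symterm_chi (n j : nat) :
  symterm (chi n) j = symterm (zpow q) j / (qpoch p p (n - j) * qpoch p p (n + j)).
Proof.
  unfold symterm, chi. destruct (Nat.eqb_spec j 0) as [->|Hj].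
  - simpl. now rewrite Nat.sub_0_r, Nat.add_0_r.
  - replace (Z.abs_nat (- Z.of_nat j)) with j by lia.
    replace (Z.abs_nat (Z.of_nat j)) with j by lia.
    field. split; apply qpoch_sqr_neq_0.
Qed.

Lemma symsum_chi (n : nat) :
  symsum (chi n) n
  = (/ q) ^ n * sum_n (fun k => q ^ k / (qpoch p p k * qpoch p p (2 * n - k))) (2 * n).
Proof.
  unfold symsum. rewrite Cpow_inv, <- sum_n_Cmult_l by exact Hq0. apply sum_n_Cext_loc.
  intros k Hk. unfold chi. rewrite zpow_sub_of_nat by exact Hq0.
  destruct (le_lt_dec k n) as [Hkn|Hnk].
  - replace (Z.abs_nat (Z.of_nat k - Z.of_nat n)) with (n - k)%nat by lia.
    replace (n - (n - k))%nat with k by lia. replace (n + (n - k))%nat with (2 * n - k)%nat by lia.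
    field. repeat split; auto using qpoch_sqr_neq_0, Cpow_nz.
  - replace (Z.abs_nat (Z.of_nat k - Z.of_nat n)) with (k - n)%nat by lia.
    replace (n - (k - n))%nat with (2 * n - k)%nat by lia. replace (n + (k - n))%nat with k by lia.
    field. repeat split; auto using qpoch_sqr_neq_0, Cpow_nz.
Qed.

Lemma bailey_beta_eq (n : nat) :
  @eq C (sum_n (fun r => (1 - q ^ (2 * r + 1)) * bailey_alpha q r * bailey_kernel q n r) n)
        (bailey_beta q n).
Proof.
  rewrite (sum_n_Cext_loc _ (fun r => tele_term n r * sum_n (symterm psi) r))
    by (intros r _; rewrite bailey_alpha_fold; unfold tele_term; ring).
  rewrite sum_n_triangle_swap.
  assert (Hb : 1 + q ^ (2 * n + 1) <> 0) by (rewrite Nat.add_1_r; apply one_plus_pow_S_neq_0).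
  rewrite (sum_n_Cext_loc _ (fun j => symterm (chi n) j * / (1 + q ^ (2 * n + 1)))).
  - rewrite sum_n_Cmult_r, <- symsum_fold, symsum_chi, sum_pow_div_qpoch_sqr.
    unfold bailey_beta. field. split; auto using qpoch_q_neq_0.
  - intros j Hj. rewrite sum_tele_term, symterm_chi, <- symterm_psi by exact Hj.
    unfold tele_sum. field. repeat split; auto using qpoch_sqr_neq_0.
Qed.
End Bailey_pair.

(** * The transformation formula *)

Section Main_identity.
Variables q a c : C.
Hypotheses (Hq : (0 < Cmod q)%R) (Hq1 : (Cmod q < 1)%R) (Ha : a <> 0) (Hc : c <> 0).
Hypotheses (Hpa : forall n, qpoch (q ^ 2 * a) (q ^ 2) n <> 0)
           (Hpc : forall n, qpoch (q ^ 2 * c) (q ^ 2) n <> 0).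
Hypothesis Hs : (Cmod (a * c / q) < 1)%R.

Let p := q ^ 2.

Definition weight (n : nat) : C := qpoch (p / a) p n * qpoch (p / c) p n * (a * c) ^ n.

Definition weight_den (n : nat) : C := qpoch (p * a) p n * qpoch (p * c) p n.

Definition prefactor_inv : C := qpinf (p * a) p * qpinf (p * c) p / (qpinf p p * qpinf (a * c) p).

Lemma q_neq_0 : q <> 0.
Proof. intros E. rewrite E, Cmod_0 in Hq. lra. Qed.

Lemma Cmod_ac_eq : Cmod (a * c) = (Cmod (a * c / q) * Cmod q)%R.
Proof. rewrite Cmod_div by exact q_neq_0. field. lra. Qed.

Lemma Cmod_ac_le : (Cmod (a * c) <= Cmod (a * c / q))%R.
Proof. rewrite Cmod_ac_eq. pose proof (Cmod_ge_0 (a * c / q)). nra. Qed.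

Lemma Cmod_ac_lt_1 : (Cmod (a * c) < 1)%R.
Proof. pose proof Cmod_ac_le. lra. Qed.

Lemma lhs_term_eq (n : nat) : lhs_term q a c n = weight n * bailey_beta q n.
Proof.
  unfold lhs_term, weight, bailey_beta. fold p.
  replace (a * c / q) with (a * c * / q) by reflexivity. rewrite Cpow_mult_l. unfold Cdiv. ring.
Qed.

Lemma rhs_term_eq (n : nat) :
  rhs_term q a c n = bailey_alpha q n * ((1 - q ^ (2 * n + 1)) * weight n / weight_den n).
Proof.
  unfold rhs_term, bailey_alpha, symsum. rewrite <- sum_n_Cmult_r.
  apply sum_n_Cext_loc. intros k _. unfold weight, weight_den. fold p. unfold Cdiv. ring.
Qed.

Lemma p_neq_0 : p <> 0.
Proof. apply Cpow_nz, q_neq_0. Qed.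

(* The q-Gauss parameters of the inner sum over n = m + r. *)
Let A (r : nat) : C := p / a * p ^ r.
Let B (r : nat) : C := p / c * p ^ r.
Let C' (r : nat) : C := p * p ^ (2 * r + 1).

Lemma pow_2r1 (r : nat) : p ^ (2 * r + 1) = p ^ r * p ^ r * p.
Proof. replace (2 * r + 1)%nat with (r + r + 1)%nat by lia. now rewrite !Cpow_add_r, Cpow_1_r. Qed.

Lemma gauss_parameters (r : nat) :
  C' r / A r = p * a * p ^ r /\ C' r / B r = p * c * p ^ r /\ C' r / (A r * B r) = a * c.
Proof.
  assert (Hpr := Cpow_nz p r p_neq_0). pose proof p_neq_0.
  unfold A, B, C'. rewrite pow_2r1. repeat split; field; repeat split; auto.
Qed.

Lemma weight_kernel_eq (r m : nat) :
  weight (m + r) * bailey_kernel q (m + r) r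
  = weight r / qpoch p p (2 * r + 1) * gauss_term (A r) (B r) p (C' r) m.
Proof.
  pose proof (Cmod_sqr_lt_1 q Hq1) as Hp1. fold p in Hp1.
  destruct (gauss_parameters r) as [_ [_ Ez]].
  unfold weight, bailey_kernel, gauss_term. fold p. rewrite Ez.
  rewrite (Nat.add_comm m r).
  replace (r + m - r)%nat with m by lia.
  replace (r + m + r + 1)%nat with ((2 * r + 1) + m)%nat by lia.
  rewrite (qpoch_add (p / a)), (qpoch_add (p / c)), (qpoch_add p p (2 * r + 1)), Cpow_add_r.
  fold (A r) (B r) (C' r).
  assert (qpoch p p m <> 0) by (apply qpoch_neq_0; lra).
  assert (qpoch (C' r) p m <> 0) by (apply qpoch_neq_0; [apply Cmod_mult_pow_lt_1|]; lra).
  assert (qpoch p p (2 * r + 1) <> 0) by (apply qpoch_neq_0; lra).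
  field. repeat split; auto.
Qed.

Lemma is_series_inner (r : nat) :
  is_series (fun m => weight (m + r) * bailey_kernel q (m + r) r)
    (weight r * prefactor_inv / weight_den r).
Proof.
  pose proof (Cmod_sqr_lt_1 q Hq1) as Hp1. fold p in Hp1.
  pose proof p_neq_0 as Hp0. assert (Hpr := Cpow_nz p r Hp0).
  assert (HA : A r <> 0) by (apply Cmult_neq_0; [apply Cdiv_neq_0|]; assumption).
  assert (HB : B r <> 0) by (apply Cmult_neq_0; [apply Cdiv_neq_0|]; assumption).
  assert (HC : (Cmod (C' r) < 1)%R) by (apply Cmod_mult_pow_lt_1; lra).
  destruct (gauss_parameters r) as [EA [EB Ez]].
  assert (Hgauss := q_gauss (A r) (B r) p Hp1 HA HB (C' r) HC
                      ltac:(rewrite Ez; exact Cmod_ac_lt_1)).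
  rewrite EA, EB, Ez in Hgauss.
  apply (is_series_ext _ _ _ (fun m => eq_sym (weight_kernel_eq r m))).
  replace (weight r * prefactor_inv / weight_den r)
    with (weight r / qpoch p p (2 * r + 1)
          * (qpinf (p * a * p ^ r) p * qpinf (p * c * p ^ r) p
             / (qpinf (C' r) p * qpinf (a * c) p))).
  - exact (is_series_scal_l _ _ _ Hgauss).
  - assert (qpinf (C' r) p <> 0) by (apply qpinf_neq_0; [|intros n; apply qpoch_neq_0]; lra).
    assert (qpinf (a * c) p <> 0)
      by (pose proof Cmod_ac_lt_1; apply qpinf_neq_0; [|intros n; apply qpoch_neq_0]; lra).
    assert (qpoch p p (2 * r + 1) <> 0) by (apply qpoch_neq_0; lra).
    assert (Hpar := Hpa r). assert (Hpcr := Hpc r). fold p in Hpar, Hpcr.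
    unfold prefactor_inv, weight_den.
    rewrite (qpinf_add (p * a) p r Hp1), (qpinf_add (p * c) p r Hp1),
            (qpinf_add p p (2 * r + 1) Hp1).
    fold (C' r). field. repeat split; assumption.
Qed.

Lemma Cmod_weight_le : exists U, (0 < U)%R /\
  forall n, (Cmod (weight n) <= U * Cmod (a * c) ^ n)%R.
Proof.
  pose proof (Cmod_sqr_lt_1 q Hq1) as Hp1. fold p in Hp1.
  exists (exp (Cmod (p / a) / (1 - Cmod p)) * exp (Cmod (p / c) / (1 - Cmod p)))%R.
  split; [apply Rmult_lt_0_compat; apply exp_pos|].
  intros n. unfold weight. rewrite (Cmod_mult (_ * _) ((a * c) ^ n)), Cmod_mult, Cmod_pow.
  apply Rmult_le_compat_r; [apply pow_le, Cmod_ge_0|].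
  apply Rmult_le_compat; try apply Cmod_ge_0; now apply Cmod_qpoch_le.
Qed.

Lemma Cmod_bailey_alpha_ac_le (r : nat) :
  (Cmod (bailey_alpha q r) * Cmod (a * c) ^ r <= INR (S (2 * r)) * Cmod (a * c / q) ^ r)%R.
Proof.
  assert (Hqr : (0 < Cmod q ^ r)%R) by (apply pow_lt; lra).
  eapply Rle_trans.
  - apply Rmult_le_compat_r; [apply pow_le, Cmod_ge_0|].
    exact (Cmod_bailey_alpha_le q r q_neq_0 (Rlt_le _ _ Hq1)).
  - rewrite Cmod_ac_eq, Rpow_mult_distr. right. field. lra.
Qed.

Lemma alpha_weight_bound : exists K tau, (0 <= K)%R /\ (0 <= tau < 1)%R /\
  forall r m,
  (Cmod ((1 - q ^ (2 * r + 1)) * bailey_alpha q r * weight (m + r)) <= K * tau ^ (r + m))%R.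
Proof.
  set (s := Cmod (a * c / q)). assert (Hs0 : (0 <= s)%R) by apply Cmod_ge_0.
  destruct (succ_pow_le_geom s (conj Hs0 Hs)) as [K0 [tau [HK0 [Hstau Hgeom]]]].
  destruct Cmod_weight_le as [U [HU HUn]].
  exists (4 * U * K0)%R, tau. split; [nra|]. split; [lra|].
  intros r m. rewrite !Cmod_mult.
  assert (H1 : (Cmod (1 - q ^ (2 * r + 1)) <= 2)%R).
  { eapply Rle_trans; [apply Cmod_1_minus_le|]. rewrite Cmod_pow.
    pose proof (pow_bound_01 (Cmod q) (2 * r + 1) (conj (Cmod_ge_0 q) (Rlt_le _ _ Hq1))). lra. }
  assert (H2 : (Cmod (bailey_alpha q r) * Cmod (a * c) ^ r <= 2 * K0 * tau ^ r)%R).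
  { eapply Rle_trans; [apply Cmod_bailey_alpha_ac_le|]. fold s.
    assert (INR (S (2 * r)) <= 2 * INR (S r))%R
      by (rewrite !S_INR, mult_INR; simpl; pose proof (pos_INR r); lra).
    assert (0 <= s ^ r)%R by (apply pow_le; lra).
    specialize (Hgeom r). nra. }
  assert (H3 : (Cmod (weight (m + r)) <= U * Cmod (a * c) ^ r * tau ^ m)%R).
  { eapply Rle_trans; [apply HUn|].
    rewrite pow_add, (Rmult_comm (Cmod (a * c) ^ m)), <- Rmult_assoc.
    apply Rmult_le_compat_l; [apply Rmult_le_pos; [lra | apply pow_le, Cmod_ge_0]|].
    apply pow_incr. pose proof Cmod_ac_le as Hac. fold s in Hac. split; [apply Cmod_ge_0 | lra]. }
  assert (0 <= Cmod (1 - q ^ (2 * r + 1)))%R by apply Cmod_ge_0.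
  assert (0 <= Cmod (bailey_alpha q r))%R by apply Cmod_ge_0.
  assert (0 <= tau ^ m)%R by (apply pow_le; lra).
  apply Rle_trans with (2 * Cmod (bailey_alpha q r) * (U * Cmod (a * c) ^ r * tau ^ m))%R.
  - apply Rmult_le_compat; [nra | apply Cmod_ge_0 | nra | exact H3].
  - rewrite pow_add.
    replace (2 * Cmod (bailey_alpha q r) * (U * Cmod (a * c) ^ r * tau ^ m))%R
      with (2 * U * tau ^ m * (Cmod (bailey_alpha q r) * Cmod (a * c) ^ r))%R by ring.
    replace (4 * U * K0 * (tau ^ r * tau ^ m))%R with (2 * U * tau ^ m * (2 * K0 * tau ^ r))%R
      by ring.
    apply Rmult_le_compat_l; [nra | exact H2].
Qed.

Lemma ex_rhs_series : exists T, is_series (rhs_term q a c) T.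
Proof.
  pose proof (Cmod_sqr_lt_1 q Hq1) as Hp1. fold p in Hp1.
  destruct alpha_weight_bound as [K [tau [HK [Htau Hb]]]].
  destruct (qpoch_bounded_below (p * a) p Hp1 Hpa) as [La [HLa HLan]].
  destruct (qpoch_bounded_below (p * c) p Hp1 Hpc) as [Lc [HLc HLcn]].
  apply (ex_series_Cmod_le _ (fun r => K / (La * Lc) * tau ^ r)%R).
  - intros r. assert (Hden : (La * Lc <= Cmod (weight_den r))%R)
      by (unfold weight_den; rewrite Cmod_mult;
          apply Rmult_le_compat; [lra | lra | apply HLan | apply HLcn]).
    assert (Hden0 : weight_den r <> 0) by (intros E; rewrite E, Cmod_0 in Hden; nra).
    rewrite rhs_term_eq.
    replace (bailey_alpha q r * ((1 - q ^ (2 * r + 1)) * weight r / weight_den r))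
      with ((1 - q ^ (2 * r + 1)) * bailey_alpha q r * weight (0 + r) / weight_den r)
      by (simpl; unfold Cdiv; ring).
    rewrite Cmod_div by exact Hden0.
    replace (K / (La * Lc) * tau ^ r)%R with (K * tau ^ (r + 0) / (La * Lc))%R
      by (rewrite Nat.add_0_r; field; nra).
    apply Rmult_le_compat; [apply Cmod_ge_0 | apply Rlt_le, Rinv_0_lt_compat; nra | apply Hb |].
    apply Rinv_le_contravar; [nra | exact Hden].
  - eexists. apply is_series_geom_scal. exact Htau.
Qed.

Lemma Cmod_bailey_kernel_le : exists L, (0 < L)%R /\
  forall n r, (Cmod (bailey_kernel q n r) <= / (L * L))%R.
Proof.
  pose proof (Cmod_sqr_lt_1 q Hq1) as Hp1. fold p in Hp1.
  destruct (qpoch_bounded_below p p Hp1) as [L [HL HLn]]; [intros n; apply qpoch_neq_0; lra|].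
  exists L. split; [exact HL|]. intros n r. unfold bailey_kernel. fold p.
  assert (H1 := HLn (n - r)%nat). assert (H2 := HLn (n + r + 1)%nat).
  rewrite Cmod_inv, Cmod_mult.
  - apply Rinv_le_contravar; [nra | apply Rmult_le_compat; lra].
  - apply Cmult_neq_0; intros E; [rewrite E, Cmod_0 in H1 | rewrite E, Cmod_0 in H2]; lra.
Qed.

Lemma is_series_lhs (T : C) :
  is_series (rhs_term q a c) T -> is_series (lhs_term q a c) (prefactor_inv * T).
Proof.
  intros HT.
  destruct alpha_weight_bound as [K [tau [HK [Htau Hb]]]].
  destruct Cmod_bailey_kernel_le as [L [HL HLn]].
  set (f r m :=
    (1 - q ^ (2 * r + 1)) * bailey_alpha q r * (weight (m + r) * bailey_kernel q (m + r) r)).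
  apply (is_series_ext (fun n => sum_n (fun r => f r (n - r)%nat) n)).
  { intros n. rewrite lhs_term_eq, <- (bailey_beta_eq q q_neq_0 Hq1 n), <- sum_n_Cmult_l.
    apply sum_n_Cext_loc. intros r Hr. unfold f. replace (n - r + r)%nat with n by lia. ring. }
  apply (is_series_antidiagonal f (K / (L * L)) tau
           (fun r => (1 - q ^ (2 * r + 1)) * bailey_alpha q r
                     * (weight r * prefactor_inv / weight_den r))).
  - apply Rdiv_le_0_compat; nra.
  - exact Htau.
  - intros r m. unfold f.
    replace ((1 - q ^ (2 * r + 1)) * bailey_alpha q r
             * (weight (m + r) * bailey_kernel q (m + r) r))
      with ((1 - q ^ (2 * r + 1)) * bailey_alpha q r * weight (m + r) * bailey_kernel q (m + r) r)
      by ring.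
    rewrite Cmod_mult.
    replace (K / (L * L) * tau ^ (r + m))%R with (K * tau ^ (r + m) * / (L * L))%R
      by (unfold Rdiv; ring).
    apply Rmult_le_compat; [apply Cmod_ge_0 | apply Cmod_ge_0 | apply Hb | apply HLn].
  - intros r. exact (is_series_scal_l _ _ _ (is_series_inner r)).
  - assert (E : forall r, @eq C (prefactor_inv * rhs_term q a c r)
                   ((1 - q ^ (2 * r + 1)) * bailey_alpha q r
                    * (weight r * prefactor_inv / weight_den r)))
      by (intros r; rewrite rhs_term_eq; unfold Cdiv; ring).
    exact (is_series_ext _ _ _ E (is_series_scal_l _ _ _ HT)).
Qed.

Lemma prefactor_mul_inv :
  qpinf p p * qpinf (a * c) p / (qpinf (p * a) p * qpinf (p * c) p) * prefactor_inv = 1.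
Proof.
  pose proof (Cmod_sqr_lt_1 q Hq1) as Hp1. fold p in Hp1. pose proof Cmod_ac_lt_1.
  assert (qpinf p p <> 0) by (apply qpinf_neq_0; [|intros n; apply qpoch_neq_0]; lra).
  assert (qpinf (a * c) p <> 0) by (apply qpinf_neq_0; [|intros n; apply qpoch_neq_0]; lra).
  assert (qpinf (p * a) p <> 0) by (apply qpinf_neq_0; [exact Hp1 | exact Hpa]).
  assert (qpinf (p * c) p <> 0) by (apply qpinf_neq_0; [exact Hp1 | exact Hpc]).
  unfold prefactor_inv. field. repeat split; assumption.
Qed.

End Main_identity.

Theorem theorem8p4 (q a c : C) :
  (0 < Cmod q)%R -> (Cmod q < 1)%R ->
  a <> 0 -> c <> 0 ->
  (forall n : nat, qpoch (q^2 * a) (q^2) n <> 0) ->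
  (forall n : nat, qpoch (q^2 * c) (q^2) n <> 0) ->
  (Cmod (a * c / q) < 1)%R ->
  exists S T : C,
    is_series (lhs_term q a c) S /\
    is_series (rhs_term q a c) T /\
    qpinf (q^2) (q^2) * qpinf (a * c) (q^2)
      / (qpinf (q^2 * a) (q^2) * qpinf (q^2 * c) (q^2)) * S = T.
Proof.
  intros Hq Hq1 Ha Hc Hpa Hpc Hs.
  destruct (ex_rhs_series q a c Hq Hq1 Hpa Hpc Hs) as [T HT].
  exists (prefactor_inv q a c * T), T. split; [|split].
  - apply (is_series_lhs q a c); assumption.
  - exact HT.
  - rewrite Cmult_assoc, (prefactor_mul_inv q a c Hq Hq1 Hpa Hpc Hs). ring.
Qed.
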